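(* Let $n,m$ be positive integers with $2(m+1)\leq n$ and let $I$ be a non-empty independent set of $C_n^m$. Then $\gamma_{gr}(C_n^m,I)=n-|I|m$ if $|I|\geq 2$, and $\gamma_{gr}(C_n^m,I)=n-2m$ if $|I|=1$.
   Context: $C_n^m$ is the $m$-th power of the cycle $C_n$: vertex set $[n]=\{1,\dots,n\}$ (with addition modulo $n$), two distinct vertices being adjacent iff their distance in the cycle $1,2,\dots,n,1$ is at most $m$. For a sequence $S=(v_1,\dots,v_k)$ of distinct vertices, $\widehat S$ is its set of vertices, $|S|=k$, $PN_S(v_i)=N[v_i]\setminus\bigcup_{j<i}N[v_j]$ ($N[\cdot]$ the closed neighborhood). $S$ is a legal dominating sequence if $\widehat S$ is dominating and each $PN_S(v_i)\ne\emptyset$. For such $S$, the footprinter $f_S(x)$ of $x$ is the unique $v\in\widehat S$ with $x\in PN_S(v)$, and $I_S=\{v:f_S(v)=v\}$. For an independent set $I$, $\gamma_{gr}(G,I)$ is the maximum length of a legal dominating sequence $S$ of $G$ with $I_S=I$ ($-\infty$ if none exists). *)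

From mathcomp Require Import all_boot.
Set Implicit Arguments. Unset Strict Implicit. Unset Printing Implicit Defensive.

Section Graph.
Variable T : finType.
Variable adj : rel T.

Definition cnbhd (v : T) : {set T} := [set u | (u == v) || adj v u].

(* PN_S(v) when v is preceded in S by the vertices of [prev] *)
Definition PN (v : T) (prev : seq T) : {set T} :=
  cnbhd v :\: \bigcup_(u <- prev) cnbhd u.

Fixpoint legal_from (prev s : seq T) : bool :=
  match s with
  | [::] => true
  | v :: s' => (PN v prev != set0) && legal_from (rcons prev v) s'
  end.

Definition dominating_set (D : {set T}) : bool :=
  \bigcup_(u in D) cnbhd u == [set: T].

Definition legal_dom_seq (S : seq T) : bool :=
  [&& uniq S, dominating_set [set u in S] & legal_from [::] S].

(* footprinter f_S(x): the first v_i in S with x in N[v_i], i.e. the unique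
   v_i with x in PN_S(v_i) (only meaningful when S is dominating) *)
Definition footprinter (S : seq T) (x : T) : T :=
  nth x S (find (fun v => x \in cnbhd v) S).

Definition I_S (S : seq T) : {set T} := [set v | footprinter S v == v].

Definition independent (I : {set T}) : bool :=
  [forall u in I, forall v in I, ~~ adj u v].

Definition has_lds (I : {set T}) (k : nat) : bool :=
  [exists t : k.-tuple T, legal_dom_seq t && (I_S t == I)].

(* gamma_gr(G, I): maximum length of a legal dominating sequence S with
   I_S = I; None encodes -infinity (no such sequence).  Lengths are bounded
   by #|T| since the vertices of S are distinct. *)
Definition gamma_gr (I : {set T}) : option nat :=
  if [exists k : 'I_#|T|.+1, has_lds I k]
  then Some (\max_(k : 'I_#|T|.+1 | has_lds I k) (k : nat))
  else None.
End Graph.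

Definition cyc_dist (n : nat) (i j : 'I_n) : nat :=
  let d := maxn i j - minn i j in minn d (n - d).

Definition cyc_pow_adj (n m : nat) : rel 'I_n :=
  fun i j => (i != j) && (cyc_dist i j <= m).
Arguments cyc_pow_adj : clear implicits.
Arguments cyc_dist : clear implicits.

From mathcomp Require Import all_boot zify.
Set Implicit Arguments. Unset Strict Implicit. Unset Printing Implicit Defensive.

(* Along a legal sequence S, let D be the set of vertices
   dominated so far, r the number of maximal runs of D on the cycle and k the
   number of vertices of S that are their own footprinters.  The quantity
   m (k + r) + |S| never exceeds |D|: a new vertex v enlarges D by its private
   neighbourhood, and inside the window N[v] of 2m + 1 consecutive vertices this
   gain pays m for v itself if v was undominated and m for each run it adds.  At the
   end D is everything and r = 0, whence m |I_S| + |S| <= n; just before the last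
   vertex k >= 1 and r >= 1, whence 2m + |S| <= n.  Measure offsets from a vertex a of I, let K be the largest
   offset in I and t = max(K, m) + m.  Visit a, then the offsets n - 1 down to
   t + 1 (each dominating a new vertex m further down), then the offsets 1 up to
   t, keeping only those o <= K with no vertex of I among o + 1, ..., o + m.
   Exactly the vertices of I are their own footprinters, and at most
   m (|I| - 1) + (t - K) offsets are left out. *)

Section LegalSequences.
Variables (T : finType) (adj : rel T).
Local Notation N := (cnbhd adj).

Definition dominated (s : seq T) : {set T} := \bigcup_(u <- s) N u.

Lemma mem_cnbhd_self v : v \in N v.
Proof. by rewrite inE eqxx. Qed.

Lemma mem_dominated x s : (x \in dominated s) = has (fun u => x \in N u) s.
Proof.
elim: s => [|u s IH]; first by rewrite /dominated big_nil inE.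
by rewrite /dominated big_cons inE -/(dominated s) IH.
Qed.

Lemma dominated_nil : dominated [::] = set0.
Proof. by rewrite /dominated big_nil. Qed.

Lemma dominated_rcons s v : dominated (rcons s v) = dominated s :|: N v.
Proof. by rewrite /dominated -cats1 big_cat big_seq1. Qed.

Lemma dominating_setE S :
  dominating_set adj [set u in S] = (dominated S == [set: T]).
Proof.
congr (_ == _); apply/setP => x; rewrite mem_dominated.
by apply/bigcupP/hasP => -[u]; rewrite ?inE; exists u; rewrite ?inE.
Qed.

Lemma legal_from_rcons prev s v : legal_from adj prev (rcons s v) =
  legal_from adj prev s && (PN adj v (prev ++ s) != set0).
Proof.
elim: s prev => [|u s IH] prev /=; first by rewrite cats0 andbT.
by rewrite IH -cats1 -catA cat1s andbA.
Qed.

Definition fresh (s : seq T) (v : T) : bool :=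
  v \notin dominated (take (index v s) s).

Definition fresh_count (s : seq T) : nat := count (fresh s) s.

Lemma fresh_count_rcons s v : v \notin s ->
  fresh_count (rcons s v) = fresh_count s + (v \notin dominated s).
Proof.
move=> vNs; rewrite /fresh_count /fresh -cats1 count_cat /= addn0; congr (_ + _).
  apply: eq_in_count => u us /=.
  by rewrite index_cat us take_cat index_mem us.
by rewrite index_cat (negbTE vNs) /= eqxx addn0 take_cat ltnn subnn take0 cats0.
Qed.

Lemma I_S_fresh S : uniq S -> dominated S = [set: T] ->
  I_S adj S = [set v in S | fresh S v].
Proof.
move=> uS domS; apply/setP => x; rewrite !inE /footprinter /fresh.
have : has (fun v => x \in N v) S by rewrite -mem_dominated domS inE.
rewrite has_find => find_lt.
case xS : (x \in S) => /=; last first.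
  by apply/negbTE/eqP => e; move: (mem_nth x find_lt); rewrite e xS.
have find_le : find (fun v => x \in N v) S <= index x S.
  by rewrite leqNgt; apply/negP => /(before_find x); rewrite nth_index ?mem_cnbhd_self.
rewrite -[X in _ == X](nth_index x xS) nth_uniq ?index_mem //.
by rewrite mem_dominated has_take_leq ?index_size // -leqNgt eqn_leq find_le.
Qed.

Lemma card_I_S S : uniq S -> dominated S = [set: T] ->
  #|I_S adj S| = fresh_count S.
Proof.
move=> uS domS; rewrite I_S_fresh // /fresh_count -size_filter.
rewrite -(card_uniqP (filter_uniq _ uS)).
by apply: eq_card => x; rewrite !inE mem_filter andbC.
Qed.

Lemma gamma_gr_eq I k :
  (exists2 S, legal_dom_seq adj S & I_S adj S = I /\ size S = k) ->
  (forall S, legal_dom_seq adj S -> I_S adj S = I -> size S <= k) ->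
  gamma_gr adj I = Some k.
Proof.
move=> [S lS [IS sizeS]] maxS.
have k_le : k < #|T|.+1.
  by case/andP: lS => uS _; rewrite ltnS -sizeS -(card_uniqP uS) max_card.
have hasS : has_lds adj I (Ordinal k_le).
  by apply/existsP; exists (Tuple (introT eqP sizeS)); rewrite /= lS IS eqxx.
rewrite /gamma_gr; case: existsP => [_|[]]; last by exists (Ordinal k_le).
congr Some.
apply/eqP; rewrite eqn_leq; apply/andP; split.
  apply/bigmax_leqP => j /existsP[t /andP[lt /eqP It]].
  by rewrite -(size_tuple t) maxS.
exact: (leq_bigmax_cond (Ordinal k_le) hasS).
Qed.

Section Schedule.
Variables (len : nat) (f : nat -> T) (sel : pred nat) (I : {set T}).

Definition schedule t : seq T := [seq f u | u <- iota 0 t & sel u].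

Lemma schedule_S t :
  schedule t.+1 = schedule t ++ (if sel t then [:: f t] else [::]).
Proof.
by rewrite /schedule -addn1 iotaD filter_cat map_cat /=; case: (sel t).
Qed.

Lemma mem_dominated_schedule y t : reflect
  (exists2 u, u < t & sel u && (y \in N (f u))) (y \in dominated (schedule t)).
Proof.
rewrite mem_dominated has_map; apply: (iffP hasP) => [[u]|[u ut /andP[su yu]]].
  by rewrite mem_filter mem_iota /= add0n => /andP[su ut] yu; exists u; rewrite ?su.
by exists u; rewrite ?mem_filter ?mem_iota ?su.
Qed.

Hypothesis f_inj : forall t1 t2, t1 < len -> t2 < len -> sel t1 -> sel t2 ->
  f t1 = f t2 -> t1 = t2.
Hypothesis f_private : forall t, t < len -> sel t ->
  exists2 y, y \in N (f t) & y \notin dominated (schedule t).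
Hypothesis f_fresh : forall t, t < len -> sel t ->
  (f t \in I) = (f t \notin dominated (schedule t)).
Hypothesis f_cover : forall y, exists2 t, t < len & sel t && (y \in N (f t)).
Hypothesis f_onto_I : forall v, v \in I -> exists2 t, t < len & sel t && (f t == v).

Lemma mem_schedule v :
  reflect (exists2 t, t < len & sel t && (f t == v)) (v \in schedule len).
Proof.
apply: (iffP mapP) => [[t]|[t tl /andP[st /eqP <-]]].
  by rewrite mem_filter mem_iota /= add0n => /andP[st tl] ->; exists t; rewrite ?st ?eqxx.
by exists t; rewrite ?mem_filter ?mem_iota ?st.
Qed.

Lemma legal_schedule t : t <= len -> legal_from adj [::] (schedule t).
Proof.
elim: t => [//|t IH] tl; rewrite schedule_S.
case: ifP => st; last by rewrite cats0 IH // ltnW.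
rewrite cats1 legal_from_rcons IH ?(ltnW tl) //=.
have [y yN yD] := f_private tl st.
by apply/set0Pn; exists y; rewrite in_setD yN andbT.
Qed.

Lemma uniq_schedule : uniq (schedule len).
Proof.
rewrite map_inj_in_uniq ?filter_uniq ?iota_uniq // => x y.
by rewrite !mem_filter !mem_iota /= !add0n => /andP[sx xl] /andP[sy yl]; apply: f_inj.
Qed.

Lemma take_schedule t : t < len -> sel t ->
  take (index (f t) (schedule len)) (schedule len) = schedule t.
Proof.
move=> tl st.
have -> : schedule len =
    schedule t ++ f t :: [seq f u | u <- iota t.+1 (len - t.+1) & sel u].
  by rewrite /schedule -{1}(subnKC (ltnW tl)) iotaD -subnSK // filter_cat map_cat /= st.
have ftN : f t \notin schedule t.
  apply/mapP => -[u]; rewrite mem_filter mem_iota /= add0n => /andP[su ut] e.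
  by have := f_inj (ltn_trans ut tl) tl su st (esym e); lia.
by rewrite index_cat (negbTE ftN) /= eqxx addn0 take_size_cat.
Qed.

Lemma dominated_schedule : dominated (schedule len) = [set: T].
Proof.
apply/setP => y; rewrite inE; apply/mem_dominated_schedule.
by have [t tl /andP[st yt]] := f_cover y; exists t; rewrite ?st.
Qed.

Lemma schedule_lds :
  legal_dom_seq adj (schedule len) /\ I_S adj (schedule len) = I.
Proof.
split.
  by rewrite /legal_dom_seq uniq_schedule dominating_setE dominated_schedule eqxx
    legal_schedule.
rewrite (I_S_fresh uniq_schedule dominated_schedule); apply/setP => v; rewrite inE.
case: mem_schedule => [[t tl /andP[st /eqP <-]]|vN] /=.
  by rewrite /fresh take_schedule // f_fresh.
by apply/esym/negP => /f_onto_I.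
Qed.

End Schedule.
End LegalSequences.

Section RunExits.
Variable out : pred nat.

Definition run_exit j := ~~ out j && out j.+1.

Lemma all_out_iota lo k :
  out (lo + k) -> ~~ has run_exit (iota lo k) -> all out (iota lo k.+1).
Proof.
elim: k lo => [|k IH] lo; first by rewrite addn0 /= andbT.
rewrite -addSnnS [has _ _]/= negb_or => out_end /andP[exit_lo no_exit].
have /= /andP[out_succ all_out] := IH lo.+1 out_end no_exit.
rewrite /= out_succ all_out !andbT.
by move: exit_lo; rewrite /run_exit out_succ andbT negbK.
Qed.

(* Read [out j] as "vertex j of the window N[v] is undominated" and [run_exit j]
   as "a run of dominated vertices ends at j".  The undominated vertices of the
   window pay [m] for the centre and [m] for the right end, except in a half of
   the window where a run ends. *)
Lemma window_gain m : has out (iota 0 (2 * m).+1) ->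
  m * (out m + (out (2 * m) && out (2 * m).+1)) + 1 <=
  m * (has run_exit (iota 0 m) + has run_exit (iota m m)) + count out (iota 0 (2 * m).+1).
Proof.
have -> : iota 0 (2 * m).+1 = iota 0 m ++ m :: iota m.+1 m.
  by rewrite (_ : (2 * m).+1 = m + m.+1) ?iotaD //; lia.
rewrite has_count count_cat /= => out_pos.
have left : out m -> ~~ has run_exit (iota 0 m) -> count out (iota 0 m) = m.
  move=> out_m /(@all_out_iota 0 m out_m).
  by rewrite -addn1 iotaD all_cat all_count size_iota => /andP[/eqP].
have right : out (2 * m) && out (2 * m).+1 -> ~~ has run_exit (iota m m) ->
    out m && (count out (iota m.+1 m) == m).
  rewrite mul2n -addnn => /andP[out_2m _] /(@all_out_iota m m out_2m).
  by rewrite /= all_count size_iota.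
move: left right out_pos; rewrite mul2n -addnn.
case: (out m) (out (m + m) && out (m + m).+1) => [] [];
  case: (has run_exit (iota 0 m)) (has run_exit (iota m m)) => [] [] /=; lia.
Qed.
End RunExits.

Lemma card_setU_setD (T : finType) (A B : {set T}) : #|A :|: B| = #|A| + #|B :\: A|.
Proof. by rewrite -(cardsID A (A :|: B)) setUK setDUl setDv set0U. Qed.

Lemma count_iota_card n (p : pred nat) :
  count p (iota 0 n) = #|[set o : 'I_n | p o]|.
Proof.
rewrite -val_enum_ord count_map cardsE cardE /enum_mem size_filter.
by rewrite (@eq_filter _ _ predT) // filter_predT; apply: eq_count.
Qed.

Lemma modn_lt_double a n : a < n + n -> a %% n = if a < n then a else a - n.
Proof.
move=> a_lt; case: ifP => [/modn_small // | a_ge].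
have -> : a = a - n + n by lia.
by rewrite modnDr modn_small; lia.
Qed.

Section Cycle.
Variables (n' m : nat).
Local Notation n := n'.+1.
Local Notation adj := (cyc_pow_adj n m).
Local Notation N := (cnbhd adj).

Definition shift (b : 'I_n) (j : nat) : 'I_n := inord ((b + j) %% n).

Definition offset (b u : 'I_n) : nat := (u + n - b) %% n.

(* Offsets [x, y < n] at cyclic distance at most [m]. *)
Definition near (x y : nat) : bool :=
  [|| (x <= y + m) && (y <= x + m), x + n <= y + m | y + n <= x + m].

Lemma shiftE b j : val (shift b j) = (b + j) %% n.
Proof. by rewrite /shift /= inordK // ltn_pmod. Qed.

Lemma shift_add b j k : shift (shift b j) k = shift b (j + k).
Proof. by apply: val_inj; rewrite !shiftE modnDml addnA. Qed.

Lemma shiftS b j : shift (shift b j) 1 = shift b j.+1.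
Proof. by rewrite shift_add addn1. Qed.

Lemma shift0 b : shift b 0 = b.
Proof. by apply: val_inj; rewrite shiftE addn0 modn_small. Qed.

Lemma offset_lt b u : offset b u < n.
Proof. by rewrite /offset ltn_pmod. Qed.

Lemma shift_offset b u : shift b (offset b u) = u.
Proof.
apply: val_inj; rewrite shiftE /offset modnDmr.
have -> : b + (u + n - b) = u + n by have := ltn_ord b; lia.
by rewrite modnDr modn_small.
Qed.

Lemma offset_shift b j : j < n -> offset b (shift b j) = j.
Proof.
move=> j_lt; have b_lt := ltn_ord b; rewrite /offset shiftE.
rewrite (@modn_lt_double (b + j)); last by lia.
by case: ifP => ?; rewrite modn_lt_double; try case: ifP; lia.
Qed.

Lemma shift_inj b j k : j < n -> k < n -> shift b j = shift b k -> j = k.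
Proof.
by move=> j_lt k_lt e; rewrite -(offset_shift b j_lt) -(offset_shift b k_lt) e.
Qed.

Lemma mem_cnbhd u v : (u \in N v) = (u == v) || (cyc_dist n v u <= m).
Proof.
rewrite /cnbhd inE /cyc_pow_adj.
by case: eqVneq => //= ->; rewrite /cyc_dist maxnn minnn subnn min0n.
Qed.

Lemma mem_cnbhd_shift b x y : x < n -> y < n ->
  (shift b x \in N (shift b y)) = near x y.
Proof.
move=> x_lt y_lt; rewrite mem_cnbhd.
case: eqVneq => [/shift_inj e | ne] /=.
  by rewrite (e x_lt y_lt) /near leq_addr.
have b_lt := ltn_ord b.
rewrite /cyc_dist !shiftE (@modn_lt_double (b + x)); last by lia.
rewrite (@modn_lt_double (b + y)); last by lia.
by case: ifP => ?; case: ifP => ?; apply/idP/idP; rewrite /near; lia.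
Qed.

Lemma count_le_card (A : {set 'I_n}) b (p : pred nat) lo len : lo + len <= n ->
  (forall j, lo <= j < lo + len -> p j -> shift b j \in A) ->
  count p (iota lo len) <= #|A|.
Proof.
move=> fits inA; rewrite -size_filter -(size_map (shift b)).
have uniq_img : uniq [seq shift b j | j <- iota lo len & p j].
  rewrite map_inj_in_uniq ?filter_uniq ?iota_uniq // => x y.
  by rewrite !mem_filter !mem_iota => /andP[_ ?] /andP[_ ?]; apply: shift_inj; lia.
rewrite -(card_uniqP uniq_img); apply/subset_leq_card/subsetP => x /mapP[j].
by rewrite mem_filter mem_iota => /andP[pj ?] ->; apply: inA.
Qed.

Hypothesis m_gt0 : 0 < m.
Hypothesis n_large : 2 * (m + 1) <= n.

Lemma shift_sub_m v : shift (shift v (n - m)) m = v.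
Proof.
rewrite shift_add subnK; last by lia.
by apply: val_inj; rewrite shiftE modnDr modn_small.
Qed.

Lemma mem_cnbhd_window b u : (u \in N (shift b m)) = (offset b u <= 2 * m).
Proof.
have off_lt := offset_lt b u.
rewrite -{1}(shift_offset b u) mem_cnbhd_shift //; last by lia.
by apply/idP/idP; rewrite /near; lia.
Qed.

Definition run_ends (D : {set 'I_n}) : {set 'I_n} := [set x in D | shift x 1 \notin D].

Lemma run_ends0 : run_ends set0 = set0.
Proof. by apply/setP => x; rewrite !inE. Qed.

Lemma run_endsT : run_ends setT = set0.
Proof. by apply/setP => x; rewrite !inE. Qed.

Lemma run_ends_eq0 (D : {set 'I_n}) : run_ends D = set0 -> D = set0 \/ D = setT.
Proof.
move=> noend; have [-> | /set0Pn[x xD]] := eqVneq D set0; [by left | right].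
have closed j : shift x j \in D.
  elim: j => [|j IH]; first by rewrite shift0.
  apply/negPn/negP => out_j; have : shift x j \in run_ends D.
    by rewrite inE IH shiftS.
  by rewrite noend inE.
by apply/setP => y; rewrite in_setT -(shift_offset x y) closed.
Qed.

Section Step.
Variables (D : {set 'I_n}) (v : 'I_n).
(* N[v] is the window of the vertices [shift b j] with [j <= 2 m]. *)
Let b := shift v (n - m).
Let out j := shift b j \notin D.
Let W := [set x | offset b x < 2 * m].

Lemma run_ends_setU_cnbhd :
  #|run_ends (D :|: N v)| <= #|run_ends D :\: W| + (out (2 * m) && out (2 * m).+1).
Proof.
have v_eq : v = shift b m by rewrite shift_sub_m.
set e := out _ && _.
suff sub : run_ends (D :|: N v) \subset
    (run_ends D :\: W) :|: (if e then [set shift b (2 * m)] else set0).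
  apply: leq_trans (subset_leq_card sub) (leq_trans (leq_card_setU _ _) _).
  by rewrite leq_add2l; case: (e); rewrite ?cards1 ?cards0.
apply/subsetP => x; rewrite inE => /andP[xDN sxDN].
have x_eq : x = shift b (offset b x) by rewrite shift_offset.
set j := offset b x in x_eq; have j_lt : j < n := offset_lt b x.
have j_ge : 2 * m <= j.
  rewrite leqNgt; apply/negP => j_small; move: sxDN.
  by rewrite x_eq shiftS in_setU v_eq mem_cnbhd_window offset_shift ?orbT //; lia.
rewrite in_setU in_setD inE ltnNge j_ge /=.
case xD : (x \in D).
  by rewrite inE xD; move: sxDN; rewrite in_setU negb_or => /andP[->].
have j_eq : j = 2 * m.
  by move: xDN; rewrite in_setU xD v_eq mem_cnbhd_window /= -/j; lia.
have -> : e.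
  rewrite /e /out -j_eq -x_eq xD /=.
  by move: sxDN; rewrite x_eq shiftS j_eq in_setU negb_or => /andP[].
by rewrite in_set1 x_eq j_eq eqxx orbT.
Qed.

Lemma run_exits_window : count (run_exit out) (iota 0 (2 * m)) <= #|run_ends D :&: W|.
Proof.
apply: (count_le_card (b := b)) => [|j /= j_lt /andP[/negPn jD sjD]]; first by lia.
by rewrite /out in sjD; rewrite !inE jD shiftS sjD offset_shift /=; lia.
Qed.

Lemma private_window : count out (iota 0 (2 * m).+1) <= #|N v :\: D|.
Proof.
apply: (count_le_card (b := b)) => [|j /= j_lt jD]; first by lia.
rewrite /out in jD; rewrite in_setD jD -{1}(shift_sub_m v) mem_cnbhd_window.
by rewrite offset_shift; lia.
Qed.

Lemma has_out_window : N v :\: D != set0 -> has out (iota 0 (2 * m).+1).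
Proof.
case/set0Pn => x; rewrite in_setD -(shift_offset b x) -(shift_sub_m v).
rewrite mem_cnbhd_window offset_shift ?offset_lt // => /andP[xD x_le].
by apply/hasP; exists (offset b x); rewrite ?mem_iota.
Qed.

Lemma run_ends_step : N v :\: D != set0 ->
  m * ((v \notin D) + #|run_ends (D :|: N v)|) + 1 <=
  m * #|run_ends D| + #|N v :\: D|.
Proof.
move=> PN_v.
have gain := window_gain (has_out_window PN_v).
have exits : has (run_exit out) (iota 0 m) + has (run_exit out) (iota m m) <=
    #|run_ends D :&: W|.
  apply: leq_trans run_exits_window.
  by rewrite mul2n -addnn iotaD add0n count_cat !has_count; lia.
have out_m : out m = (v \notin D) by rewrite /out /b shift_sub_m.
have := run_ends_setU_cnbhd; rewrite -out_m -(cardsID W (run_ends D)).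
set E := _ && _ in gain *; set x := #|_ :\: W| => setU_le.
have runs_le : m * (out m + #|run_ends (D :|: N v)|) + 1 <= m * (out m + E) + 1 + m * x.
  rewrite [leqRHS]addnAC leq_add2r -mulnDr leq_mul2l; apply/orP; right.
  by rewrite -addnA leq_add2l addnC.
apply: leq_trans runs_le _; rewrite [m * (_ + x)]mulnDr [leqRHS]addnAC leq_add2r.
apply: leq_trans gain (leq_add _ private_window).
by rewrite leq_mul2l exits orbT.
Qed.
End Step.

Lemma dominated_bound p : uniq p -> legal_from adj [::] p ->
  m * (fresh_count adj p + #|run_ends (dominated adj p)|) + size p <=
  #|dominated adj p|.
Proof.
elim/last_ind: p => [|p v IH]; first by rewrite dominated_nil run_ends0 cards0 /= muln0.
rewrite rcons_uniq legal_from_rcons => /andP[vNp up] /andP[lp PN_v].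
have := @run_ends_step (dominated adj p) v PN_v; have := IH up lp.
rewrite fresh_count_rcons // dominated_rcons card_setU_setD size_rcons -addnA.
rewrite !(mulnDr m (fresh_count _ _)).
(* [move:] merges copies of the same cardinals that differ only in coercion
   annotations, which [lia] would take for distinct atoms. *)
move: (m * fresh_count _ _) (m * #|run_ends _|) (m * (_ + _)) => F R S.
by move: #|dominated adj p| #|N v :\: _| => d z; lia.
Qed.

Lemma cnbhd_neqT v : N v != [set: 'I_n].
Proof.
apply/negP => /eqP NT.
have : shift (shift v (n - m)) (2 * m).+1 \in N v by rewrite NT inE.
by rewrite -{2}(shift_sub_m v) mem_cnbhd_window offset_shift; lia.
Qed.

Lemma lds_upper_bounds S : legal_dom_seq adj S ->
  m * #|I_S adj S| + size S <= n /\ 2 * m + size S <= n.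
Proof.
case/and3P => uS; rewrite dominating_setE => /eqP domS legS; split.
  have := dominated_bound uS legS.
  by rewrite domS run_endsT cards0 addn0 cardsT card_ord card_I_S.
case/lastP: S uS legS domS => [_ _|p v].
  by rewrite dominated_nil => /setP/(_ ord0); rewrite !inE.
rewrite rcons_uniq legal_from_rcons dominated_rcons size_rcons.
move=> /andP[vNp up] /andP[lp PN_v] domS.
have PN_v' : N v :\: dominated adj p != set0 := PN_v.
have [u [p' p_eq]] : exists u p', p = u :: p'.
  case: p {vNp up lp PN_v PN_v'} domS => [|u p'] domS; last by exists u, p'.
  by move: (cnbhd_neqT v); rewrite -domS dominated_nil set0U eqxx.
have fresh_pos : 0 < fresh_count adj p.
  by rewrite p_eq /fresh_count /= /fresh index_head take0 dominated_nil inE.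
have dom_neqT : dominated adj p != setT.
  by apply: contraNneq PN_v' => ->; rewrite setDT.
have run_pos : 0 < #|run_ends (dominated adj p)|.
  rewrite card_gt0; apply/eqP => /run_ends_eq0[dom0|domT]; last first.
    by rewrite domT eqxx in dom_neqT.
  have : u \in dominated adj p by rewrite p_eq mem_dominated /= mem_cnbhd_self.
  by rewrite dom0 inE.
have dom_lt : #|dominated adj p| < n.
  have := @proper_card _ (dominated adj p) setT.
  by rewrite properT cardsT card_ord; apply.
have two_m : 2 * m <= m * (fresh_count adj p + #|run_ends (dominated adj p)|).
  by rewrite mulnC leq_mul2l; apply/orP; right; lia.
have := dominated_bound up lp; move: two_m dom_lt.
by move: (size p) => s; lia.
Qed.

Lemma lds_size_le S : legal_dom_seq adj S ->
  size S <= if 2 <= #|I_S adj S| then n - #|I_S adj S| * m else n - 2 * m.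
Proof. by case/lds_upper_bounds; case: ifP; nia. Qed.

Section Construction.
Variables (I : {set 'I_n}) (a K : 'I_n).
Hypothesis aI : a \in I.
Hypothesis I_indep : independent adj I.
Hypothesis KI : shift a K \in I.
Hypothesis K_max : forall o : 'I_n, shift a o \in I -> o <= K.

Definition inI o := (o < n) && (shift a o \in I).

Definition asc_top := maxn K m + m.
Definition desc_len := n - asc_top - 1.

Definition played o :=
  [|| o == 0, asc_top < o | (o <= K) && ~~ has inI (iota o.+1 m)].

Definition pos t := if t == 0 then 0 else if t <= desc_len then n - t else t - desc_len.

Lemma inI_near x y : inI x -> inI y -> x != y -> ~~ near x y.
Proof.
move=> /andP[x_lt xI] /andP[y_lt yI] xy; rewrite -(mem_cnbhd_shift a) // mem_cnbhd.
have sxy : shift a x != shift a y by apply: contra_neq xy => /shift_inj; apply.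
move/forall_inP/(_ _ yI)/forall_inP/(_ _ xI): I_indep.
by rewrite (negbTE sxy) /cyc_pow_adj eq_sym sxy.
Qed.

Lemma inI0 : inI 0.
Proof. by rewrite /inI shift0 aI. Qed.

Lemma inIK : inI K.
Proof. by rewrite /inI ltn_ord KI. Qed.

Lemma inI_le o : inI o -> o <= K.
Proof. by case/andP => o_lt oI; exact: (@K_max (Ordinal o_lt) oI). Qed.

Lemma inI_far o : inI o -> o != 0 -> m < o /\ o + m < n.
Proof. by move=> oI o0; have := inI_near oI inI0 o0; rewrite /near; lia. Qed.

Lemma K_cases : K = 0 :> nat \/ (m < K /\ K + m < n).
Proof. by have [-> | /(inI_far inIK)] := eqVneq (K : nat) 0; [left | right]. Qed.

Lemma played_inI o : inI o -> played o.
Proof.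
move=> oI; rewrite /played; case: eqVneq => //= o0; rewrite inI_le //=.
apply/orP; right; apply/hasPn => o' /[!mem_iota] o'_win; apply/negP => o'I.
have oo' : o != o' by apply/eqP; lia.
by move: (inI_near oI o'I oo'); rewrite /near; lia.
Qed.

Lemma asc_top_bounds :
  [/\ K + m <= asc_top, m + m <= asc_top & desc_len + asc_top + 1 = n].
Proof. by rewrite /desc_len /asc_top; case: K_cases => [K0 | [mK Kn]]; split; lia. Qed.

Lemma pos0 : pos 0 = 0.
Proof. by []. Qed.

Lemma pos_desc t : 0 < t <= desc_len -> pos t = n - t.
Proof. by rewrite /pos; case: eqVneq => [-> // | _] /andP[_ ->]. Qed.

Lemma pos_asc t : desc_len < t -> pos t = t - desc_len.
Proof. by rewrite /pos; case: eqVneq => [-> // | _] /[!ltnNge] /negPf ->. Qed.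

Lemma pos_asc_add o : 0 < o -> pos (o + desc_len) = o.
Proof. by move=> o_pos; rewrite pos_asc ?addnK //; lia. Qed.

Lemma pos_cases t : [\/ t = 0 /\ pos t = 0,
  0 < t <= desc_len /\ pos t = n - t | desc_len < t /\ pos t = t - desc_len].
Proof.
have [-> | t0] := eqVneq t 0; first by constructor 1.
have [tL | Lt] := leqP t desc_len; [constructor 2 | constructor 3].
  by rewrite pos_desc; lia.
by rewrite pos_asc.
Qed.

Lemma pos_lt t : t < n -> pos t < n.
Proof. by have [_ _ top_n] := asc_top_bounds; case: (pos_cases t) => -[? ->]; lia. Qed.

Lemma pos_inj t1 t2 : t1 < n -> t2 < n -> pos t1 = pos t2 -> t1 = t2.
Proof.
have [_ _ top_n] := asc_top_bounds.
by case: (pos_cases t1) => -[? ->]; case: (pos_cases t2) => -[? ->]; lia.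
Qed.

Lemma pos_onto o : o < n -> exists2 t, t < n & pos t = o.
Proof.
move=> o_lt; have [Ktop mtop top_n] := asc_top_bounds.
have [-> | o0] := eqVneq o 0; first by exists 0.
have [big | small] := ltnP asc_top o.
  by exists (n - o); rewrite ?pos_desc; lia.
by exists (o + desc_len); rewrite ?pos_asc; lia.
Qed.

Lemma playedP o : played o ->
  [\/ o = 0, asc_top < o | o <= K /\ forall o', inI o' -> ~~ (o < o' <= o + m)].
Proof.
case/or3P => [/eqP | | /andP[oK /hasPn noI]]; [by constructor 1 | by constructor 2 |].
constructor 3; split=> // o' o'I; apply: contraL o'I => o'_win.
by apply: noI; rewrite mem_iota; lia.
Qed.

Definition visit t := shift a (pos t).
Definition active t := played (pos t).

Lemma undominated_visit z t : z < n -> t <= n ->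
  (forall u, u < t -> active u -> ~~ near z (pos u)) ->
  shift a z \notin dominated adj (schedule visit active t).
Proof.
move=> z_lt t_le far; apply/mem_dominated_schedule => -[u ut /andP[au]].
by rewrite /visit mem_cnbhd_shift ?pos_lt ?(negbTE (far u ut au)) //; lia.
Qed.

Lemma dominated_visit z t u : z < n -> u < t -> t <= n -> active u ->
  near z (pos u) -> shift a z \in dominated adj (schedule visit active t).
Proof.
move=> z_lt ut t_le au zu; apply/mem_dominated_schedule; exists u => //.
by rewrite au /visit mem_cnbhd_shift ?pos_lt //; lia.
Qed.

Lemma inI_undominated t u : t < n -> inI (pos t) -> u < t -> active u ->
  ~~ near (pos t) (pos u).
Proof.
move=> t_lt tI ut au; have [Ktop mtop top_n] := asc_top_bounds; have tK := inI_le tI.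
case: (pos_cases t) => -[t_ph pt]; [lia | lia |].
have [far1 far2] : m < pos t /\ pos t + m < n by apply: inI_far; lia.
rewrite /near; case: (pos_cases u) => -[u_ph pu]; rewrite pu; [lia | lia |].
case: (playedP au) => [| | [_ noI]]; [rewrite pu; lia | rewrite pu; lia |].
by move: (noI _ tI); rewrite pu; lia.
Qed.

Lemma desc_undominated t u : 0 < t <= desc_len -> u < t -> ~~ near (pos t - m) (pos u).
Proof.
move=> t_ph ut; have [Ktop mtop top_n] := asc_top_bounds.
rewrite /near pos_desc //; case: (pos_cases u) => -[u_ph ->]; lia.
Qed.

Lemma asc_nonI t : desc_len < t -> t < n -> active t -> ~~ inI (pos t) ->
  [/\ 0 < pos t, pos t + m < K, K + m < n &
      forall o, inI o -> ~~ (pos t < o <= pos t + m)].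
Proof.
move=> Lt t_lt act tNI; have [Ktop mtop top_n] := asc_top_bounds.
rewrite /active pos_asc // in act tNI *.
case: (playedP act) => [| | [tK noI]]; [lia | lia |].
have tNK : t - desc_len != K by apply: contraNneq tNI => ->; exact: inIK.
have K_win := noI _ inIK.
have [K0 | [_ Kn]] := K_cases; [lia | split => //; lia].
Qed.

Lemma asc_undominated t u : desc_len < t -> t < n -> active t -> ~~ inI (pos t) ->
  u < t -> ~~ near (pos t + m) (pos u).
Proof.
move=> Lt t_lt act tNI ut; have [Ktop mtop top_n] := asc_top_bounds.
have [] := asc_nonI Lt t_lt act tNI; rewrite /near (pos_asc Lt) => t_pos tK Kn _.
by case: (pos_cases u) => -[u_ph ->]; lia.
Qed.

Lemma active0 : active 0.
Proof. by rewrite /active pos0 /played eqxx. Qed.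

Lemma nonI_dominated t : t < n -> active t -> ~~ inI (pos t) ->
  exists2 u, u < t & active u && near (pos t) (pos u).
Proof.
move=> t_lt act tNI; have [Ktop mtop top_n] := asc_top_bounds.
case: (pos_cases t) => -[t_ph pt].
- by rewrite pt inI0 in tNI.
- have [t1 | t1] := eqVneq t 1.
    by exists 0; [lia | rewrite active0 pt t1 pos0 /near; lia].
  exists t.-1; first lia.
  rewrite /active !pos_desc ?pt; try lia.
  by apply/andP; split; [apply/or3P; constructor 2 | rewrite /near]; lia.
have [t_pos tK Kn noI] := asc_nonI t_ph t_lt act tNI; rewrite pt in t_pos tK noI tNI *.
have [t1 | t1] := eqVneq (t - desc_len) 1.
  by exists 0; [lia | rewrite active0 t1 pos0 /near; lia].
exists t.-1; first lia.
rewrite /active pos_asc; last lia.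
apply/andP; split; last by rewrite /near; lia.
apply/or3P; constructor 3; apply/andP; split; first lia.
apply/hasPn => o /[!mem_iota] o_win.
have [o_eq | o_neq] := eqVneq o (t - desc_len); first by rewrite o_eq.
by apply: contraTN o_win => /noI; lia.
Qed.

Lemma visit_inj t1 t2 : t1 < n -> t2 < n -> active t1 -> active t2 ->
  visit t1 = visit t2 -> t1 = t2.
Proof. by move=> t1_lt t2_lt _ _ /shift_inj e; apply: pos_inj; rewrite // e ?pos_lt. Qed.

Lemma visit_fresh t : t < n -> active t ->
  (visit t \in I) = (visit t \notin dominated adj (schedule visit active t)).
Proof.
move=> t_lt act; rewrite [visit t]/visit.
case tI : (shift a (pos t) \in I).
  rewrite undominated_visit ?pos_lt ?(ltnW t_lt) // => u ut.
  by apply: inI_undominated; rewrite // /inI pos_lt.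
have [|u ut /andP[au near_tu]] := nonI_dominated t_lt act; first by rewrite /inI tI andbF.
by rewrite (dominated_visit (pos_lt t_lt) ut (ltnW t_lt) au near_tu).
Qed.

Lemma visit_private t : t < n -> active t ->
  exists2 y, y \in N (visit t) & y \notin dominated adj (schedule visit active t).
Proof.
move=> t_lt act; have [Ktop mtop top_n] := asc_top_bounds; rewrite [visit t]/visit.
case tI : (inI (pos t)).
  exists (shift a (pos t)); first exact: mem_cnbhd_self.
  apply: undominated_visit => [||u ut au]; [exact: pos_lt | exact: ltnW |].
  exact: inI_undominated.
case: (pos_cases t) => -[t_ph pt].
- by rewrite pt inI0 in tI.
- exists (shift a (pos t - m)); first by rewrite mem_cnbhd_shift ?pos_lt /near; lia.
  by apply: undominated_visit => [||u ut _]; [lia | lia | exact: desc_undominated].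
have [t_pos tK Kn _] := asc_nonI t_ph t_lt act (negbT tI).
exists (shift a (pos t + m)); first by rewrite mem_cnbhd_shift ?pos_lt /near; lia.
apply: undominated_visit => [||u ut _]; [lia | lia |].
by apply: asc_undominated; rewrite ?tI.
Qed.

Lemma visit_cover y : exists2 t, t < n & active t && (y \in N (visit t)).
Proof.
have [Ktop mtop top_n] := asc_top_bounds; rewrite -(shift_offset a y).
set z := offset a y; have z_lt : z < n := offset_lt a y.
have cover_by t : t < n -> active t -> near z (pos t) ->
    exists2 t, t < n & active t && (shift a z \in N (visit t)).
  by move=> t_lt act z_t; exists t; rewrite // act /visit mem_cnbhd_shift ?pos_lt.
have [z_le | m_lt] := leqP z m.
  by apply: (cover_by 0); rewrite ?active0 // pos0 /near; lia.
have [top_lt_z | z_le] := ltnP asc_top (z + m).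
  have [n_le | zm_lt] := leqP n (z + m).
    by apply: (cover_by 0); rewrite ?active0 // pos0 /near; lia.
  apply: (cover_by (n - (z + m))); rewrite /active ?pos_desc /near; try lia.
  by apply/or3P; constructor 2; lia.
have z_K : z <= K by move: z_le; rewrite /asc_top; lia.
case zp : (played z).
  by apply: (cover_by (z + desc_len)); rewrite /active ?pos_asc_add // /near; lia.
have : has inI (iota z.+1 m).
  by apply: contraFT zp => noI; apply/or3P; constructor 3; rewrite z_K.
case/hasP => o /[!mem_iota] z_o oI; have o_K := inI_le oI.
apply: (cover_by (o + desc_len)); rewrite /active ?pos_asc_add ?played_inI // /near; lia.
Qed.

Lemma visit_onto_I v : v \in I -> exists2 t, t < n & active t && (visit t == v).
Proof.
have [Ktop mtop top_n] := asc_top_bounds; rewrite -(shift_offset a v) => vI.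
set z := offset a v; have zI : inI z by rewrite /inI offset_lt.
have [z0 | z0] := eqVneq z 0; first by exists 0; rewrite // active0 /visit pos0 z0 eqxx.
have z_K := inI_le zI.
exists (z + desc_len); first lia.
by rewrite /active /visit pos_asc_add ?played_inI ?eqxx //; lia.
Qed.

Lemma construction_lds :
  legal_dom_seq adj (schedule visit active n) /\ I_S adj (schedule visit active n) = I.
Proof.
exact: (schedule_lds visit_inj visit_private visit_fresh visit_cover visit_onto_I).
Qed.

Lemma size_schedule_visit : size (schedule visit active n) = count played (iota 0 n).
Proof.
have pos_perm : perm_eq (map pos (iota 0 n)) (iota 0 n).
  apply: uniq_perm; rewrite ?iota_uniq //.
    by rewrite map_inj_in_uniq ?iota_uniq // => x y /[!mem_iota] ? ?; apply: pos_inj; lia.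
  move=> o; rewrite mem_iota add0n; apply/mapP/idP => [[t] /[!mem_iota] t_lt -> | o_lt].
    exact: pos_lt.
  by have [t t_lt <-] := pos_onto o_lt; exists t; rewrite ?mem_iota.
by rewrite size_map size_filter -(permP pos_perm played) count_map.
Qed.

Lemma card_inI : #|[set o : 'I_n | inI o]| = #|I|.
Proof.
have -> : [set o : 'I_n | inI o] = (fun o : 'I_n => shift a o) @^-1: I.
  by apply/setP => o; rewrite !inE /inI ltn_ord.
by apply: card_preimset => x y /shift_inj e; apply: val_inj; apply: e.
Qed.

Lemma count_unplayed :
  count (predC played) (iota 0 n) <= m * (#|I| - 1) + (asc_top - K).
Proof.
rewrite count_iota_card.
pose I' := [set o : 'I_n | inI o] :\ ord0.
pose tail := [set (inord (K.+1 + j) : 'I_n) | j : 'I_(asc_top - K)].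
pose window :=
  [set (inord (p.1 - p.2.+1) : 'I_n) | p : 'I_n * 'I_m in setX I' [set: 'I_m]].
have sub : [set o : 'I_n | predC played o] \subset window :|: tail.
  apply/subsetP => o; rewrite inE /= /played !negb_or => /and3P[o0 o_le o_win].
  have o_lt := ltn_ord o.
  rewrite in_setU; have [K_lt_o | o_K] := ltnP K o.
    apply/orP; right; apply/imsetP.
    have j_lt : o - K.+1 < asc_top - K by lia.
    by exists (Ordinal j_lt) => //; apply: ord_inj; rewrite /= inordK; lia.
  move: o_win; rewrite o_K /= negbK => /hasP[o' /[!mem_iota] o_o' o'I].
  apply/orP; left; apply/imsetP.
  have o'_lt : o' < n by case/andP: o'I.
  have j_lt : o' - o - 1 < m by lia.
  exists (Ordinal o'_lt, Ordinal j_lt).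
    by rewrite !inE /= o'I !andbT -val_eqE /=; lia.
  by apply: ord_inj; rewrite /= inordK; lia.
have card_I' : #|I'| = #|I| - 1.
  by rewrite -card_inI (cardsD1 ord0 [set o : 'I_n | inI o]) inE inI0 add1n subn1.
have card_window : #|window| <= m * (#|I| - 1).
  apply: leq_trans (leq_imset_card _ _) _.
  by rewrite cardsX cardsT card_ord card_I' mulnC.
have card_tail : #|tail| <= asc_top - K.
  by apply: leq_trans (leq_imset_card _ _) _; rewrite card_ord.
apply: leq_trans (subset_leq_card sub) (leq_trans (leq_card_setU _ _) _).
exact: leq_add.
Qed.

Lemma size_construction :
  (if 2 <= #|I| then n - #|I| * m else n - 2 * m) <= size (schedule visit active n).
Proof.
rewrite size_schedule_visit; have := count_predC played (iota 0 n).
have := count_unplayed; rewrite size_iota /asc_top.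
have [I2 | I1] := leqP 2 #|I|; last first.
  have I_pos : 0 < #|I| by apply/card_gt0P; exists a.
  have -> : #|I| - 1 = 0 by lia.
  lia.
have K_pos : 0 < K.
  rewrite lt0n; apply: contraTneq I2 => K0; rewrite -ltnNge ltnS -card_inI.
  rewrite -(cards1 (ord0 : 'I_n)); apply/subset_leq_card/subsetP => o.
  by rewrite !inE => /inI_le; rewrite K0 leqn0 => /eqP o0; apply/eqP/ord_inj.
have [mK _] := inI_far inIK (lt0n_neq0 K_pos).
nia.
Qed.

Lemma construction_optimal : exists2 S, legal_dom_seq adj S &
  I_S adj S = I /\ size S = if 2 <= #|I| then n - #|I| * m else n - 2 * m.
Proof.
have [lds IS] := construction_lds.
exists (schedule visit active n) => //; split=> //.
by apply/eqP; rewrite eqn_leq size_construction andbT -[in X in _ <= X]IS lds_size_le.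
Qed.

End Construction.
End Cycle.

Theorem lemma5 (n m : nat) (I : {set 'I_n}) :
  0 < n -> 0 < m -> 2 * (m + 1) <= n ->
  I != set0 -> independent (cyc_pow_adj n m) I ->
  gamma_gr (cyc_pow_adj n m) I =
    Some (if 2 <= #|I| then n - #|I| * m else n - 2 * m).
Proof.
case: n I => [//|n'] I _ m_gt0 n_large /set0Pn[a aI] I_indep.
have a0I : shift a (@ord0 n') \in I by rewrite shift0.
have [K KI K_max] := @arg_maxnP _ _ (fun o : 'I_n'.+1 => shift a o \in I) val a0I.
apply: gamma_gr_eq => [|S lS IS]; last by rewrite -IS lds_size_le.
by have := construction_optimal m_gt0 n_large aI I_indep KI K_max.
Qed.
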